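(* Let $\delta\in\{1,-1\}$ and let $\alpha,\beta,\gamma\in\mathbb{Z}[i]$ satisfy $\alpha^2+(1+\delta i)\beta^2+\gamma^2=0$, $\alpha\beta\gamma\neq0$ and $\gcd(\alpha,\beta,\gamma)\in U$. Then $\beta\equiv0\pmod{(1+i)^2}$.
   Context: $\mathbb{Z}[i]$ is the ring of Gaussian integers, $U=\{1,-1,i,-i\}$ its unit group; $\gcd(\alpha,\beta,\gamma)\in U$ means no common non-unit divisor. *)

From mathcomp Require Import all_boot all_order all_algebra all_field.
Set Implicit Arguments. Unset Strict Implicit. Unset Printing Implicit Defensive.
Import Order.TTheory GRing.Theory Num.Theory.
Local Open Scope ring_scope.

Definition gaussian (z : algC) : Prop :=
  exists a b : int, z = a%:~R + 'i * b%:~R.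

Definition gdvd (d x : algC) : Prop :=
  exists q, gaussian q /\ x = q * d.

(* gcd(a,b,c) in U: every common divisor in Z[i] is a unit of Z[i] *)
Definition gcd3_unit (a b c : algC) : Prop :=
  forall d, gaussian d -> gdvd d a -> gdvd d b -> gdvd d c -> gdvd d 1.

(* Since (1 + i)^2 = 2i, the claim says that both coordinates b1, b2 of beta
   are even; only the equation is needed, not the nonvanishing or coprimality
   hypotheses.  Taking real and imaginary parts of the equation gives two
   integer equations.  The imaginary one, read mod 2, forces b1 = b2 (mod 2).
   If both were odd, the real one, read mod 4, would make exactly one
   coordinate of alpha and exactly one of gamma odd; then a1 a2 + b1 b2 + c1 c2
   is odd, contradicting the imaginary equation read mod 4. *)
From mathcomp Require Import all_boot all_order all_algebra all_field.
From mathcomp Require Import zify ring.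
Import GRing.Theory Num.Theory.
Local Open Scope ring_scope.

Lemma int_even_or_odd (x : int) : exists p, x = 2 * p \/ x = 2 * p + 1.
Proof.
exists (x %/ 2)%Z; have := divz_eq x 2.
have := modz_ge0 x (isT : (2 : int) != 0); have := ltz_pmod x (isT : (0 : int) < 2).
lia.
Qed.

Section ParityArgument.
Context {d a1 a2 b1 b2 c1 c2 : int}.
Hypothesis d_unit : d = 1 \/ d = -1.
Hypothesis re_eq0 :
  a1 * a1 - a2 * a2 + b1 * b1 - b2 * b2 - 2 * d * b1 * b2 + c1 * c1 - c2 * c2 = 0.
Hypothesis im_eq0 :
  2 * a1 * a2 + 2 * b1 * b2 + d * b1 * b1 - d * b2 * b2 + 2 * c1 * c2 = 0.

Lemma coords_same_parity q : b1 = b2 + (2 * q + 1) -> False.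
Proof. by move=> b1E; move: im_eq0; rewrite b1E; case: d_unit => ->; lia. Qed.

Lemma coords_not_both_odd {q1 q2} : b1 = 2 * q1 + 1 -> b2 = 2 * q2 + 1 -> False.
Proof.
move=> b1E b2E.
have [p1 a1E] := int_even_or_odd a1; have [p2 a2E] := int_even_or_odd a2.
have [r1 c1E] := int_even_or_odd c1; have [r2 c2E] := int_even_or_odd c2.
move: re_eq0 im_eq0; rewrite b1E b2E.
by case: d_unit => ->; case: a1E => ->; case: a2E => ->; case: c1E => ->;
  case: c2E => ->; lia.
Qed.

Lemma coords_even : exists k1 k2, b1 = 2 * k1 /\ b2 = 2 * k2.
Proof.
have [q1 [b1E|b1E]] := int_even_or_odd b1; have [q2 [b2E|b2E]] := int_even_or_odd b2.
- by exists q1, q2.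
- by case: (coords_same_parity (- q1 + q2 - 1)); lia.
- by case: (coords_same_parity (q1 - q2)); lia.
- by case: (coords_not_both_odd b1E b2E).
Qed.

End ParityArgument.

Lemma rect_int_eq0 (x y : int) : x%:~R + 'i * y%:~R = 0 :> algC -> x = 0 /\ y = 0.
Proof.
move=> E; split; apply/eqP; rewrite -(intr_eq0 algC); apply/eqP.
- by have := congr1 (fun z => 'Re z) E; rewrite Re_rect ?realz // raddf0.
- by have := congr1 (fun z => 'Im z) E; rewrite Im_rect ?realz // raddf0.
Qed.

Lemma eqn_re_im (d a1 a2 b1 b2 c1 c2 : int) :
  (a1%:~R + 'i * a2%:~R) ^+ 2 + (1 + d%:~R * 'i) * (b1%:~R + 'i * b2%:~R) ^+ 2
    + (c1%:~R + 'i * c2%:~R) ^+ 2 = 0 :> algC ->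
  a1 * a1 - a2 * a2 + b1 * b1 - b2 * b2 - 2 * d * b1 * b2 + c1 * c1 - c2 * c2 = 0
  /\ 2 * a1 * a2 + 2 * b1 * b2 + d * b1 * b1 - d * b2 * b2 + 2 * c1 * c2 = 0.
Proof. by move=> E; apply: rect_int_eq0; rewrite -E; ring: (@sqrCi algC). Qed.

Lemma gdvd_sqr1i_double (k1 k2 : int) :
  gdvd ((1 + 'i) ^+ 2) ((2 * k1)%:~R + 'i * (2 * k2)%:~R).
Proof.
exists (k2%:~R + 'i * (- k1)%:~R); split; first by exists k2, (- k1).
by ring: (@sqrCi algC).
Qed.

Theorem lemma4p12 (delta : int) (alpha beta gamma : algC) :
  (delta = 1 \/ delta = -1) ->
  gaussian alpha -> gaussian beta -> gaussian gamma ->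
  alpha ^+ 2 + (1 + delta%:~R * 'i) * beta ^+ 2 + gamma ^+ 2 = 0 ->
  alpha * beta * gamma != 0 ->
  gcd3_unit alpha beta gamma ->
  gdvd ((1 + 'i) ^+ 2) beta.
Proof.
move=> d_unit [a1 [a2 ->]] [b1 [b2 ->]] [c1 [c2 ->]] /eqn_re_im[re_eq0 im_eq0] _ _.
have [k1 [k2 [-> ->]]] := coords_even d_unit re_eq0 im_eq0.
exact: gdvd_sqr1i_double.
Qed.
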